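(* Let $q$ be a power of a prime $p$, let $n\ge 2$, and let $X=\{F=0\}\subset\mathbb{P}^n$ be a hypersurface of degree $d$ over $\mathbb{F}_q$ such that $d\leq q+1$ and $F$ is not a $p$-th power. Then for every $1\le r\le n-1$ there exists a linear subspace $H\subset\mathbb{P}^n$ defined over $\mathbb{F}_q$ of dimension $r$ such that $H\not\subset X$ and the restriction $F|_H$ is not a $p$-th power.
   Context: $F\in\mathbb{F}_q[x_0,\dots,x_n]$ is a nonzero homogeneous polynomial. ''$F$ is a $p$-th power'' means $F=G^p$ for some polynomial $G$ (over $\overline{\mathbb{F}_q}$), equivalently all partial derivatives of $F$ vanish. *)

From HB Require Import structures.
From mathcomp Require Import all_boot all_order all_algebra all_field.
From mathcomp Require Import mpoly.
Set Implicit Arguments. Unset Strict Implicit. Unset Printing Implicit Defensive.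
Import GRing.Theory.
Local Open Scope ring_scope.

(* A polynomial F is a p-th power: F = G^p for some polynomial G
   (over the perfect field F_q this is the same as over its algebraic closure). *)
Definition is_pth_power (K : fieldType) (m p : nat) (P : {mpoly K[m]}) : Prop :=
  exists G : {mpoly K[m]}, P = G ^+ p.

(* Restriction of P (in variables x_0..x_n) to the linear subspace parametrized
   by the columns of the (n+1) x (r+1) matrix M:  x_i := \sum_j M i j * y_j. *)
Definition restrict_lin (K : fieldType) (n r : nat) (M : 'M[K]_(n.+1, r.+1))
  (P : {mpoly K[n.+1]}) : {mpoly K[r.+1]} :=
  comp_mpoly [tuple \sum_(j < r.+1) (M i j)%:MP * 'X_j | i < n.+1] P.

(* Since F is not a p-th power, some partial derivative of F is nonzero.  It is
   homogeneous of degree d - 1 <= q, and a nonzero homogeneous polynomial of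
   degree at most q has a nonzero value on F_q^(n+1): the univariate polynomials
   of degree at most q vanishing on F_q are the multiples of X^q - X.  So the
   gradient g of F is nonzero at some rational point v <> 0.  Take an
   (r+1)-dimensional rational subspace H through v on which the linear form g
   does not vanish.  By the chain rule the partial derivatives of F|_H at v are
   the values of g on H, so they do not all vanish, whereas every partial
   derivative of a p-th power is zero. *)

From HB Require Import structures.
From mathcomp Require Import all_boot all_order all_algebra all_field.
From mathcomp Require Import perm mpoly.
Set Implicit Arguments. Unset Strict Implicit. Unset Printing Implicit Defensive.
Import GRing.Theory.
Local Open Scope ring_scope.

Lemma mderiv_expr (R : comNzRingType) N i (G : {mpoly R[N]}) k :
  (G ^+ k)^`M(i) = (G ^+ k.-1 * G^`M(i)) *+ k.
Proof.
case: k => [|k]; first by rewrite expr0 mderivC.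
elim: k => [|k IH]; first by rewrite expr0 mul1r.
by rewrite exprS mderivM IH mulrnAr mulrA -exprS [_^`M(i) * _]mulrC -mulrS.
Qed.

Lemma mderiv_expr_pchar (K : fieldType) N p i (G : {mpoly K[N]}) :
  p \in [pchar K] -> (G ^+ p)^`M(i) = 0.
Proof.
move=> pK; have pKN := rmorph_pchar (@mpolyC N K) pK.
by rewrite mderiv_expr -mulr_natr (pcharf0 pKN) mulr0.
Qed.

Lemma mderiv_eq0_pchar_dvdn (K : fieldType) N p (F : {mpoly K[N]}) i m :
  p \in [pchar K] -> F^`M(i) = 0 -> m \in msupp F -> (p %| m i)%N.
Proof.
move=> pK dF0 mF; case: (posnP (m i)) => [->|mi_gt0]; first exact: dvdn0.
have := congr1 (mcoeff (m - U_(i))) dF0.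
rewrite mcoeff_mderiv mcoeff0 submK; last by rewrite lep1mP -lt0n.
rewrite mnmBE mnm1E eqxx subn1 prednK // -mulr_natr => /eqP.
by rewrite mcoeff_msupp in mF; rewrite mulf_eq0 (negbTE mF) (dvdn_pcharf pK).
Qed.

Lemma mderiv_eq0_pth_power (K : finFieldType) N p (F : {mpoly K[N]}) :
  p \in [pchar K] -> (forall i, F^`M(i) = 0) -> is_pth_power p F.
Proof.
move=> pK dF0; have pKN := rmorph_pchar (@mpolyC N K) pK.
have [root _ rootK] : bijective (pFrobenius_aut pK).
  by apply: injF_bij; exact: fmorph_inj.
pose mdivp (m : 'X_{1..N}) := [multinom (m i %/ p)%N | i < N].
exists (\sum_(m <- msupp F) root F@_m *: 'X_[mdivp m]).
rewrite {1}(mpolyE F) -(pFrobenius_autE pKN) rmorph_sum /=.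
rewrite !big_seq; apply: eq_bigr => m mF.
rewrite pFrobenius_autE exprZn -pFrobenius_autE rootK mpolyXn.
congr (_ *: 'X_[_]); apply/mnmP => i.
by rewrite mulmnE mnmE divnK // (mderiv_eq0_pchar_dvdn pK (dF0 i)).
Qed.

Lemma mderivXU (R : nzRingType) N (i j : 'I_N) : ('X_i : {mpoly R[N]})^`M(j) = (i == j)%:R.
Proof.
rewrite mderivX mnm1E; case: eqP => [<-|_]; last by rewrite scale0r.
have -> : (U_(i) - U_(i) = 0)%MM by apply/mnmP => l; rewrite mnmBE subnn mnm0E.
by rewrite mpolyX0 scale1r.
Qed.

Section ChainRule.
Variables (R : comNzRingType) (n k : nat) (lq : n.-tuple {mpoly R[k]}) (j : 'I_k).

Let chain_rule_at (P : {mpoly R[n]}) :=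
  (P \mPo lq)^`M(j) = \sum_(i < n) (P^`M(i) \mPo lq) * (tnth lq i)^`M(j).

Let chain_ruleC c : chain_rule_at c%:MP.
Proof.
rewrite /chain_rule_at comp_mpolyC mderivC big1 // => i _.
by rewrite mderivC comp_mpolyC mul0r.
Qed.

Let chain_ruleX i : chain_rule_at 'X_i.
Proof.
rewrite /chain_rule_at comp_mpolyXU (bigD1 i) //= big1 ?addr0.
  by rewrite mderivXU eqxx comp_mpoly1 mul1r (tnth_nth 0).
by move=> i' /negbTE i'i; rewrite mderivXU eq_sym i'i comp_mpoly0 mul0r.
Qed.

Let chain_ruleD P Q : chain_rule_at P -> chain_rule_at Q -> chain_rule_at (P + Q).
Proof.
rewrite /chain_rule_at => dP dQ; rewrite comp_mpolyD mderivD dP dQ -big_split /=.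
by apply: eq_bigr => i _; rewrite mderivD comp_mpolyD mulrDl.
Qed.

Let chain_ruleZ c P : chain_rule_at P -> chain_rule_at (c *: P).
Proof.
rewrite /chain_rule_at => dP; rewrite comp_mpolyZ mderivZ dP scaler_sumr.
by apply: eq_bigr => i _; rewrite mderivZ comp_mpolyZ scalerAl.
Qed.

Let chain_ruleM P Q : chain_rule_at P -> chain_rule_at Q -> chain_rule_at (P * Q).
Proof.
rewrite /chain_rule_at => dP dQ.
rewrite rmorphM mderivM dP dQ mulr_suml mulr_sumr -big_split /=.
apply: eq_bigr => i _; rewrite mderivM rmorphD !rmorphM /= mulrDl.
by rewrite mulrAC -!mulrA.
Qed.

Lemma mderiv_comp_mpoly P :
  (P \mPo lq)^`M(j) = \sum_(i < n) (P^`M(i) \mPo lq) * (tnth lq i)^`M(j).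
Proof.
rewrite (mpolyE P); apply: (big_ind chain_rule_at) => [||m _].
- by rewrite -mpolyC0.
- exact: chain_ruleD.
apply: chain_ruleZ; rewrite mpolyXE_id; apply: (big_ind chain_rule_at) => [||i _].
- by rewrite -mpolyC1.
- exact: chain_ruleM.
elim: (m i) => [|e IH]; first by rewrite expr0 -mpolyC1.
by rewrite exprS; apply: chain_ruleM.
Qed.

End ChainRule.

Lemma dhomog_mderiv (R : nzRingType) N d (F : {mpoly R[N]}) i :
  F \is d.-homog -> F^`M(i) \is d.-1.-homog.
Proof.
move=> /dhomogP dF; apply/dhomogP => m; rewrite mcoeff_msupp mcoeff_mderiv => dFm.
have mF : (m + U_(i))%MM \in msupp F.
  by rewrite mcoeff_msupp; apply: contraNneq dFm => ->; rewrite mul0rn.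
by have /= := dF _ mF; rewrite mdegD mdeg1 addn1 => <-.
Qed.

Lemma meval_dhomog_scale (R : comNzRingType) N e (P : {mpoly R[N]}) c v :
  P \is e.-homog -> P.@[fun i => c * v i] = c ^+ e * P.@[v].
Proof.
move=> /dhomogP dP; rewrite !mevalE mulr_sumr !big_seq.
apply: eq_bigr => m mP; rewrite mulrCA; congr (_ * _).
under eq_bigr do rewrite exprMn.
by rewrite big_split /= prodrXr -mdegE dP.
Qed.

Lemma poly_vanishing_finField (K : finFieldType) (u : {poly K}) :
  (size u <= #|K|.+1)%N -> (forall t, u.[t] = 0) ->
  u = u`_#|K| *: ('X^#|K| - 'X).
Proof.
move=> size_u u0; set q := #|K|; have q_gt1 : (1 < q)%N := card_finNzRing_gt1 K.
apply/eqP; rewrite -subr_eq0; set w := u - _; apply: contraT => w_neq0.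
have size_w : (size w <= q)%N.
  apply/leq_sizeP => j; rewrite leq_eqVlt => /orP[/eqP <-|q_lt_j].
    by rewrite !coefE eqxx (gtn_eqF q_gt1) subr0 mulr1 subrr.
  have /leq_sizeP/(_ j q_lt_j) u_j := size_u.
  by rewrite !coefE u_j (gtn_eqF q_lt_j) (gtn_eqF (ltn_trans q_gt1 q_lt_j)) subrr mulr0 subr0.
have w_roots : all (root w) (enum K).
  by apply/allP => t _; rewrite /root !hornerE expf_card u0 subrr mulr0 subr0.
by have := max_poly_roots w_neq0 w_roots (enum_uniq _); rewrite -cardE ltnNge size_w.
Qed.

Section LastVariable.
Variables (R : comNzRingType) (N : nat).
Implicit Types (P : {mpoly R[N.+1]}) (m : 'X_{1..N.+1}).

Local Notation widen := (widen_ord (leqnSn N)).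

Definition mcoef_last P k : {mpoly R[N]} :=
  \sum_(m <- msupp P | m ord_max == k) P@_m *: 'X_[[multinom m (widen i) | i < N]].

Lemma mnmwiden_last m :
  (mnmwiden [multinom m (widen i) | i < N] + U_(ord_max) *+ m ord_max)%MM = m.
Proof.
apply/mnmP => i; rewrite mnmDE mulmnE mnm1E.
have [j ->|->] := unliftP ord_max i; last by rewrite mnmwiden_ordmax eqxx mul1n.
rewrite (negbTE (neq_lift _ _)) mul0n addn0.
have -> : lift ord_max j = widen j by apply: val_inj; rewrite /= /bump leqNgt ltn_ord.
by rewrite mnmwiden_widen mnmE.
Qed.

Lemma mpoly_last_decomp P S : {in msupp P, forall m, m ord_max < S}%N ->
  P = \sum_(k < S) mwiden (mcoef_last P k) * 'X_ord_max ^+ k.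
Proof.
move=> P_lt_S; under eq_bigr do rewrite raddf_sum mulr_suml.
rewrite (exchange_big_dep xpredT) //= {1}(mpolyE P) !big_seq.
apply: eq_bigr => m mP; rewrite (big_pred1 (Ordinal (P_lt_S m mP))); last first.
  by move=> k /=; rewrite eq_sym -val_eqE.
by rewrite mwidenZ mwidenX -scalerAl mpolyXn -mpolyXD mnmwiden_last.
Qed.

Lemma meval_mwiden (Q : {mpoly R[N]}) v : (mwiden Q).@[v] = Q.@[fun i => v (widen i)].
Proof.
rewrite [in LHS](mpolyE Q) (raddf_sum (@mwiden N R)) raddf_sum [RHS]mevalE.
apply: eq_bigr => m _.
rewrite /= mwidenZ mwidenX mevalZ mevalX big_ord_recr /= mnmwiden_ordmax expr0 mulr1.
by under eq_bigr do rewrite mnmwiden_widen.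
Qed.

Lemma meval_mcoef_last P S a t : {in msupp P, forall m, m ord_max < S}%N ->
  P.@[fun i => if unlift ord_max i is Some j then a j else t] =
  \sum_(k < S) (mcoef_last P k).@[a] * t ^+ k.
Proof.
move=> P_lt_S; rewrite {1}(mpoly_last_decomp P_lt_S) raddf_sum; apply: eq_bigr => k _.
rewrite /= mevalM rmorphXn /= mevalXU meval_mwiden unlift_none; congr (_ * _).
apply: meval_eq => i; have -> : widen i = lift ord_max i.
  by apply: val_inj; rewrite /= /bump leqNgt ltn_ord.
by rewrite liftK.
Qed.

Lemma dhomog_mcoef_last e P k : P \is e.-homog -> mcoef_last P k \is (e - k).-homog.
Proof.
move=> /dhomogP dP; rewrite /mcoef_last big_seq_cond; apply: rpred_sum => m /andP[mP /eqP mk].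
apply: rpredZ; rewrite dhomogX /=; apply/eqP.
have /= := dP m mP; rewrite (mdegE m) big_ord_recr /= mk => <-.
by rewrite mdegE addnK; apply: eq_bigr => i _; rewrite mnmE.
Qed.

End LastVariable.

Lemma dhomog_vanishing_eq0 (K : finFieldType) N e (P : {mpoly K[N]}) :
  (e <= #|K|)%N -> P \is e.-homog -> (forall v, P.@[v] = 0) -> P = 0.
Proof.
elim: N e P => [|N IH] e P e_le_q dP P0.
  rewrite (nvar0_mpolyC_eq P erefl); have := P0 (fun _ => 0).
  by rewrite {1}(nvar0_mpolyC_eq P erefl) mevalC => ->.
set q := #|K|; have q_gt1 : (1 < q)%N := card_finNzRing_gt1 K.
have P_lt : {in msupp P, forall m : 'X_{1..N.+1}, m ord_max < e.+1}%N.
  by move=> m /(dhomogP _ _ _ dP) /= <-; rewrite ltnS mdegE big_ord_recr leq_addl.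
pose Q k := mcoef_last P k; pose u a : {poly K} := \poly_(k < e.+1) (Q k).@[a].
have u_eq a : u a = (u a)`_q *: ('X^q - 'X).
  apply: poly_vanishing_finField => [|t]; first exact: leq_trans (size_poly _ _) _.
  by rewrite horner_poly -(meval_mcoef_last a t P_lt) P0.
have u_coef a j : (u a)`_j = (u a)`_q * ((j == q)%:R - (j == 1)%:R).
  by rewrite {1}u_eq !coefE.
(* When e = q, the top coefficient Q q is a constant, while the coefficient
   Q 1 of X is homogeneous of degree q - 1 > 0 and so vanishes at the origin;
   evaluating u = c (X^q - X) there forces c = 0. *)
have u_q a : (u a)`_q = 0.
  rewrite coef_poly; case: ltnP => // q_lt_e1.
  have e_q : e = q by apply/eqP; rewrite eqn_leq e_le_q -ltnS q_lt_e1.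
  pose b i := 0 * a i.
  have Qq_b : (Q q).@[b] = (Q q).@[a].
    by rewrite (meval_dhomog_scale _ _ (dhomog_mcoef_last q dP)) e_q subnn mul1r.
  have Q1_b : (Q 1%N).@[b] = 0.
    rewrite (meval_dhomog_scale _ _ (dhomog_mcoef_last 1 dP)) e_q expr0n /=.
    by rewrite subn_eq0 leqNgt q_gt1 mul0r.
  have := u_coef b 1%N; rewrite !coef_poly q_lt_e1 ltnS e_q (ltnW q_gt1).
  by rewrite Q1_b Qq_b eqxx (ltn_eqF q_gt1) sub0r mulrN1 => /eqP; rewrite eq_sym oppr_eq0 => /eqP.
have Q_eq0 k : (k <= e)%N -> Q k = 0.
  move=> k_le_e; apply: (IH (e - k)%N); rewrite ?dhomog_mcoef_last //.
    exact: leq_trans (leq_subr k e) e_le_q.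
  by move=> a; have := u_coef a k; rewrite u_q mul0r coef_poly ltnS k_le_e.
rewrite (mpoly_last_decomp P_lt) big1 // => k _.
by rewrite [mcoef_last _ _]Q_eq0 ?mwiden0 ?mul0r // -ltnS.
Qed.

Lemma dhomog_nonvanishing (K : finFieldType) N e (P : {mpoly K[N.+1]}) :
  (e <= #|K|)%N -> P \is e.-homog -> P != 0 ->
  exists v, P.@[v] != 0 /\ exists i, v i != 0.
Proof.
move=> e_le_q dP P_neq0.
have [v Pv] : exists v, P.@[v] != 0.
  have [/existsP[v Pv]|/existsPn P0] := boolP [exists v : {ffun 'I_N.+1 -> K}, P.@[v] != 0].
    by exists v.
  case/negP: P_neq0; apply/eqP/(dhomog_vanishing_eq0 e_le_q dP) => v.
  have /negPn/eqP <- := P0 [ffun i => v i].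
  by apply: meval_eq => i; rewrite ffunE.
have [/existsP[i vi]|/existsPn v0] := boolP [exists i, v i != 0].
  by exists v; split; last exists i.
exists (fun _ => 1); split; last by exists ord0; exact: oner_neq0.
have v_eq : v =1 (fun i => 0 * 1) by move=> i; rewrite mul0r; apply/eqP/negPn/v0.
apply: contraNneq Pv => P1_0.
by rewrite (meval_eq P v_eq) (meval_dhomog_scale _ _ dP) P1_0 mulr0.
Qed.

Section LinearRestriction.
Variables (K : fieldType) (n r : nat) (M : 'M[K]_(n.+1, r.+1)).

Lemma meval_restrict_lin (G : {mpoly K[n.+1]}) y :
  (restrict_lin M G).@[y] = G.@[fun i => \sum_l M i l * y l].
Proof.
rewrite comp_mpoly_meval; apply: meval_eq => i; rewrite tnth_mktuple raddf_sum.
by apply: eq_bigr => l _; rewrite /= mevalM mevalC mevalXU.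
Qed.

Lemma mderiv_restrict_lin (F : {mpoly K[n.+1]}) j :
  (restrict_lin M F)^`M(j) = \sum_i M i j *: restrict_lin M F^`M(i).
Proof.
have dlin i : (\sum_l (M i l)%:MP * 'X_l)^`M(j) = (M i j)%:MP.
  rewrite raddf_sum (bigD1 j) //= big1 ?addr0 => [|l /negbTE lj].
    by rewrite mderiv_mulC mderivXU eqxx mulr1.
  by rewrite mderiv_mulC mderivXU lj mulr0.
rewrite mderiv_comp_mpoly; apply: eq_bigr => i _.
by rewrite tnth_mktuple dlin mulrC mul_mpolyC.
Qed.

Lemma pth_power_restrict_lin_grad p (F : {mpoly K[n.+1]}) y j :
  p \in [pchar K] -> is_pth_power p (restrict_lin M F) ->
  \sum_i (F^`M(i)).@[fun i => \sum_l M i l * y l] * M i j = 0.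
Proof.
move=> pK [G FG]; have := congr1 (meval y) (mderiv_expr_pchar j G pK).
rewrite -FG mderiv_restrict_lin meval0 raddf_sum => dR0.
rewrite -[RHS]dR0; apply: eq_bigr => i _.
by rewrite /= mevalZ meval_restrict_lin mulrC.
Qed.

End LinearRestriction.

Lemma sum_delta_mul (R : nzSemiRingType) (I : finType) (x : I) (f : I -> R) :
  \sum_i (i == x)%:R * f i = f x.
Proof. by under eq_bigr do rewrite mulr_natl mulrb; rewrite -big_mkcond big_pred1_eq. Qed.

Section UnitCompletion.
Variables (K : fieldType) (n r : nat) (v : 'I_n.+1 -> K) (k : 'I_n.+1) (s : 'I_r.+1 -> 'I_n).

Definition unit_completion_mx : 'M[K]_(n.+1, r.+1) :=
  \matrix_(i, j) if j == 0 then v i else (i == lift k (s j))%:R.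

Lemma rank_unit_completion_mx : v k != 0 -> injective s -> \rank unit_completion_mx = r.+1.
Proof.
move=> vk_neq0 s_inj; apply/eqP/row_fullP.
pose t j := lift k (s j); have t_inj : injective t by move=> a b /lift_inj/s_inj.
exists (\matrix_(a, i) if a == 0 then (i == k)%:R / v k
                       else (i == t a)%:R - (i == k)%:R * (v (t a) / v k)).
apply/matrixP => a b; rewrite !mxE; under eq_bigr do rewrite !mxE.
have [-> | b_neq0] := eqVneq b 0.
  have [a0 | a_neq0] := eqVneq a 0.
    by subst a; under eq_bigr do rewrite -mulrA; rewrite sum_delta_mul mulVf.
  under eq_bigr do rewrite mulrBl -mulrA.
  by rewrite sumrB !sum_delta_mul divfK // subrr.
under eq_bigr do rewrite mulrC.
rewrite sum_delta_mul [lift k _ == k]eq_sym (negbTE (neq_lift _ _)) /= !mul0r subr0.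
have [a0 | a_neq0] := eqVneq a 0; first by subst a; rewrite eq_sym (negbTE b_neq0).
by rewrite -/(t b) (inj_eq t_inj) eq_sym.
Qed.

End UnitCompletion.

Lemma exists_full_rank_mx_col0_nonorthogonal (K : fieldType) n r (v g : 'I_n.+1 -> K) :
  (0 < r < n)%N -> (exists k, v k != 0) -> (exists i0, g i0 != 0) ->
  exists M : 'M[K]_(n.+1, r.+1),
    [/\ \rank M = r.+1, forall i, M i 0 = v i & exists j, \sum_i g i * M i j != 0].
Proof.
case/andP=> r_gt0 r_lt_n [k vk] [i0 gi0].
pose one := Ordinal (r_gt0 : (1 < r.+1)%N); pose w := widen_ord r_lt_n.
pose s u j := tperm (w one) u (w j).
have s_inj u : injective (s u) by move=> a b /perm_inj/(congr1 val) ab; apply: val_inj.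
have col0 k' u i : unit_completion_mx v k' (s u) i 0 = v i by rewrite mxE.
have [gv_neq0|/negPn/eqP gv0] := boolP (\sum_i g i * v i != 0).
  exists (unit_completion_mx v k (s (w 0))); split => //; last first.
    by exists 0; under eq_bigr do rewrite col0.
  exact: rank_unit_completion_mx.
have [k' k'_neq_i0 vk'] : exists2 k', k' != i0 & v k' != 0.
  have [/existsP[k' /andP[]]|/existsPn v_off] := boolP [exists k', (k' != i0) && (v k' != 0)].
    by exists k'.
  have {}v_off i : i != i0 -> v i = 0 by move=> i_neq_i0; have /nandP[/negP|/negPn/eqP] := v_off i.
  have vi0 : v i0 != 0 by have [<-|/v_off vk0] := eqVneq k i0; last rewrite vk0 eqxx in vk.
  move: gv0; rewrite (bigD1 i0) //= big1 => [|i /v_off ->]; last by rewrite mulr0.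
  by rewrite addr0 => /eqP; rewrite mulf_eq0 (negbTE gi0) (negbTE vi0).
have [u i0E|i0_eq_k'] := unliftP k' i0; last by rewrite i0_eq_k' eqxx in k'_neq_i0.
exists (unit_completion_mx v k' (s u)); split => //; first exact: rank_unit_completion_mx.
exists one; under eq_bigr do rewrite mxE /= /s tpermL -i0E mulrC.
by rewrite sum_delta_mul.
Qed.

Unset Implicit Arguments. Set Strict Implicit.

Theorem lemma2p1 (K : finFieldType) (p n d : nat) (F : {mpoly K[n.+1]}) :
  prime p -> p \in [pchar K] -> (2 <= n)%N ->
  F != 0 -> F \is d.-homog ->
  (d <= #|K| + 1)%N ->
  ~ is_pth_power p F ->
  forall r : nat, (1 <= r <= n - 1)%N ->
  exists M : 'M[K]_(n.+1, r.+1),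
    \rank M = r.+1 /\ restrict_lin M F != 0 /\ ~ is_pth_power p (restrict_lin M F).
Proof.
move=> p_prime pK n_ge2 _ dF d_le F_not_pth r r_bounds.
have [i0 dF_neq0] : exists i0, F^`M(i0) != 0.
  apply/existsP; apply: contra_notT F_not_pth => /existsPn dF0.
  by apply: (mderiv_eq0_pth_power pK) => i; apply/eqP/negPn/dF0.
have d1_le : (d.-1 <= #|K|)%N by rewrite -subn1 leq_subLR addnC.
have [v [dFv_neq0 v_neq0]] := dhomog_nonvanishing d1_le (dhomog_mderiv i0 dF) dF_neq0.
have r_lt_n : (0 < r < n)%N.
  case/andP: r_bounds => -> /leq_ltn_trans; apply.
  by rewrite ltn_subrL (ltnW n_ge2).
have grad_neq0 : exists i, (F^`M(i)).@[v] != 0 by exists i0.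
have [M [rkM Mv [j grad_M]]] := exists_full_rank_mx_col0_nonorthogonal r_lt_n v_neq0 grad_neq0.
have FM_not_pth : ~ is_pth_power p (restrict_lin M F).
  have col0 : (fun i => \sum_l M i l * (l == 0)%:R) =1 v.
    by move=> i; under eq_bigr do rewrite mulrC; rewrite sum_delta_mul Mv.
  move=> /(pth_power_restrict_lin_grad (fun l => (l == 0)%:R) j pK).
  by under eq_bigr do rewrite (meval_eq _ col0); apply/eqP.
exists M; split=> //; split=> //; apply/eqP => FM0; apply: FM_not_pth.
by rewrite FM0; exists 0; rewrite expr0n (gtn_eqF (prime_gt0 p_prime)).
Qed.
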